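(* Let $G$ be a connected threshold graph with minimum degree $\delta(G)\ge 3$. Then $px_3(G)\le 3$. Moreover, the bound is tight: for every integer $r\ge 2\cdot 2^3+1=17$, the threshold graph $rK_1\vee K_3$ satisfies $px_3(rK_1\vee K_3)=3$.
   Context: All graphs are finite, simple and undirected. A graph $G$ is a threshold graph if there are a weight function $w:V(G)\to\mathbb{R}$ and a real $t$ such that distinct $u,v$ are adjacent iff $w(u)+w(v)\ge t$. $rK_1$ is the edgeless graph on $r$ vertices and $G\vee H$ is the join (disjoint union plus all edges between $G$ and $H$). An edge-coloring assigns colors to edges, adjacent edges being allowed to share a color. A tree in an edge-colored graph is proper if no two adjacent edges of it receive the same color. An edge-coloring of $G$ is a $3$-proper coloring if for every $3$-element set $S\subseteq V(G)$ there is a proper tree in $G$ containing all vertices of $S$; $px_3(G)$ is the minimum number of colors in a $3$-proper coloring of $G$. *)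

From mathcomp Require Import all_boot.
From Stdlib Require Import Reals.
Set Implicit Arguments. Unset Strict Implicit. Unset Printing Implicit Defensive.

(* A finite simple graph is a symmetric irreflexive relation e on a finType T. *)

Definition threshold_graph (T : finType) (e : rel T) : Prop :=
  exists (w : T -> R) (t : R),
    forall u v : T, u != v -> (e u v <-> (t <= w u + w v)%R).

Definition connected_graph (T : finType) (e : rel T) : Prop :=
  forall x y : T, connect e x y.

Definition min_degree_ge (T : finType) (e : rel T) (d : nat) : Prop :=
  forall v : T, d <= #|[set u | e v u]|.

(* An edge-coloring with k colors assigns a color to every edge; an edge
   {x,y} is represented by the 2-element set [set x; y] (values of the
   coloring on other sets are irrelevant). *)
Definition edge_coloring (T : finType) (k : nat) := {set T} -> 'I_k.

Definition tree_in (T : finType) (e : rel T) (U : {set T}) (F : {set {set T}}) : Prop :=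
  [/\ U != set0,
      (forall E, E \in F -> exists x y, [/\ E = [set x; y], e x y, x \in U & y \in U]),
      (forall x y, x \in U -> y \in U ->
         connect (fun a b => [set a; b] \in F) x y)
    & #|F| = #|U| - 1].

Definition proper_tree (T : finType) (e : rel T) (k : nat) (c : edge_coloring T k)
    (U : {set T}) (F : {set {set T}}) : Prop :=
  tree_in e U F /\
  (forall E1 E2, E1 \in F -> E2 \in F -> E1 != E2 -> E1 :&: E2 != set0 ->
     c E1 != c E2).

Definition three_proper_coloring (T : finType) (e : rel T) (k : nat)
    (c : edge_coloring T k) : Prop :=
  forall S : {set T}, #|S| = 3 ->
    exists U F, proper_tree e c U F /\ S \subset U.

Definition px3_le (T : finType) (e : rel T) (k : nat) : Prop :=
  exists c : edge_coloring T k, three_proper_coloring e c.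

Definition px3_eq (T : finType) (e : rel T) (k : nat) : Prop :=
  px3_le e k /\ forall j, j < k -> ~ px3_le e j.

Definition rK1_join_K3_rel (r : nat) : rel ('I_r + 'I_3)%type :=
  fun a b => match a, b with
             | inl _, inl _ => false
             | inl _, inr _ => true
             | inr _, inl _ => true
             | inr i, inr j => i != j
             end.
Arguments rK1_join_K3_rel r : clear implicits.

(* In a threshold graph, a vertex m of maximum weight outside a set X is
   adjacent to every vertex v having a neighbour u outside X, since
   t <= w v + w u <= w v + w m.  With minimum degree 3 this gives three
   distinct dominating vertices a, b, c, and any three vertices lie in a
   3-coloured proper tree made of the path a-b-c with each of them hung on
   a different one of a, b, c.

   For rK_1 \/ K_3 and at most 2 colours, an independent vertex has at most
   8 colour profiles on its three edges into K_3, so among r >= 17 of them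
   three share a profile.  A proper tree containing these three vertices S
   has maximum degree 2, so by the handshake lemma S has total degree at
   least 4; but two tree edges from S to the same vertex of K_3 would be
   adjacent and equally coloured, so S has total degree at most 3. *)

From mathcomp Require Import all_boot zify.
From Stdlib Require Import Reals Lra.
Set Implicit Arguments. Unset Strict Implicit. Unset Printing Implicit Defensive.

Lemma sum_mem_card (X : finType) (A B : {set X}) :
  \sum_(x in A) (x \in B) = #|A :&: B|.
Proof.
rewrite -sum1_card big_mkcond [RHS]big_mkcond; apply: eq_bigr => x _.
by rewrite inE; case: (x \in A).
Qed.

Section ProperTrees.

Variables (T : finType) (e : rel T) (k : nat) (c : edge_coloring T k).

Definition deg (F : {set {set T}}) (v : T) := #|[set E in F | v \in E]|.

Lemma proper_tree1 a : proper_tree e c [set a] set0.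
Proof.
split; last by move=> E1 E2; rewrite inE.
split; first by apply/set0Pn; exists a; rewrite inE.
- by move=> E; rewrite inE.
- by move=> x y /set1P-> /set1P->; apply: connect0.
- by rewrite cards0 cards1.
Qed.

Lemma tree_edge_sub U F E : tree_in e U F -> E \in F -> E \subset U.
Proof.
case=> _ edgeF _ _ /edgeF [x [y [-> _ xU yU]]].
by apply/subsetP => z /set2P[]->.
Qed.

Lemma proper_tree_add_leaf U F u v :
  proper_tree e c U F -> u \in U -> v \notin U -> e v u ->
  (forall E, E \in F -> u \in E -> c E != c [set v; u]) ->
  proper_tree e c (v |: U) ([set v; u] |: F).
Proof.
move=> [treeF properF] uU vU evu colu; have [_ edgeF connF cardF] := treeF.
have vuF : [set v; u] \notin F.
  by apply: contra vU => /(tree_edge_sub treeF)/subsetP; apply; rewrite set21.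
have leaf_edge E : E \in F -> E :&: [set v; u] != set0 -> u \in E.
  move=> EF /set0Pn[x /setIP[xE /set2P[xv|<-//]]].
  by move: vU; rewrite -xv (subsetP (tree_edge_sub treeF EF) x xE).
have subF : subrel (fun a b => [set a; b] \in F)
                   (connect (fun a b => [set a; b] \in [set v; u] |: F)).
  by move=> a b ab; apply: connect1; rewrite setU1r.
have conn_uv : connect (fun a b => [set a; b] \in [set v; u] |: F) u v.
  by apply: connect1; rewrite setUC setU11.
have conn_vu : connect (fun a b => [set a; b] \in [set v; u] |: F) v u.
  by apply: connect1; rewrite setU11.
split; first split.
- by apply/set0Pn; exists v; rewrite setU11.
- move=> E /setU1P[->|EF]; first by exists v, u; rewrite setU11 setU1r.
  have [x [y [-> exy xU yU]]] := edgeF E EF.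
  by exists x, y; rewrite !setU1r.
- move=> x y /setU1P[->|xU] /setU1P[->|yU]; first exact: connect0.
  + exact: connect_trans conn_vu (connect_sub subF (connF _ _ uU yU)).
  + exact: connect_trans (connect_sub subF (connF _ _ xU uU)) conn_uv.
  + exact: connect_sub subF _ _ (connF _ _ xU yU).
- have : 0 < #|U| by rewrite card_gt0; case: treeF.
  rewrite !cardsU1 vuF (negbTE vU) cardF /=; lia.
- move=> E1 E2 /setU1P[->|E1F] /setU1P[->|E2F]; rewrite ?eqxx //.
  + by rewrite setIC (eq_sym (c _)) => _ meet; exact: colu (leaf_edge E2 E2F meet).
  + by move=> _ meet; exact: colu (leaf_edge E1 E1F meet).
  + exact: properF.
Qed.

Lemma proper_tree_deg_le U F v : proper_tree e c U F -> deg F v <= k.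
Proof.
case=> _ properF; rewrite -[k]card_ord; apply: (@leq_card_in _ _ c) => E1 E2.
rewrite !inE => /andP[E1F vE1] /andP[E2F vE2] /eqP; apply: contraTeq => E12.
by apply: properF => //; apply/set0Pn; exists v; rewrite inE vE1.
Qed.

Lemma sum_deg (A : {set T}) F : \sum_(v in A) deg F v = \sum_(E in F) #|A :&: E|.
Proof.
transitivity (\sum_(v in A) \sum_(E in F) (v \in E)); last first.
  by rewrite exchange_big; apply: eq_bigr => E _; rewrite sum_mem_card.
apply: eq_bigr => v _; rewrite /deg setIdE -sum_mem_card; apply: eq_bigr => E _.
by rewrite inE.
Qed.

Lemma proper_tree_grow U F u v (P : Prop) :
  proper_tree e c U F -> u \in U -> (forall w, w != u -> e w u) ->
  (v \notin U -> forall E, E \in F -> u \in E -> c E != c [set v; u]) ->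
  (forall U' F', proper_tree e c U' F' -> v \in U' -> U \subset U' ->
     F' \subset [set v; u] |: F -> P) ->
  P.
Proof.
move=> treeF uU u_dom colu cont.
have [vU|vU] := boolP (v \in U); first exact: cont treeF vU (subxx U) (subsetUr _ F).
have vu : v != u by apply: contraNneq vU => ->.
apply: cont (proper_tree_add_leaf treeF uU vU (u_dom v vu) (colu vU)) _ _ _.
- exact: setU11.
- exact: subsetUr.
- exact: subxx.
Qed.

Hypothesis e_irr : irreflexive e.

Lemma tree_deg_sum U F : tree_in e U F -> \sum_(v in U) deg F v = 2 * #|F|.
Proof.
move=> treeF; have [_ edgeF _ _] := treeF.
rewrite sum_deg mulnC -sum_nat_const; apply: eq_bigr => E EF.
have [x [y [defE exy _ _]]] := edgeF E EF.
have xy : x != y by apply: contraTneq exy => ->; rewrite e_irr.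
by rewrite (setIidPr (tree_edge_sub treeF EF)) defE cards2 xy.
Qed.

(* The degrees add up to [2 |U| - 2], and the vertices outside [S]
   contribute at most [2 |U :\: S|] of it. *)
Lemma path_tree_deg_sum_ge (U S : {set T}) F :
  tree_in e U F -> {in U, forall v, deg F v <= 2} -> S \subset U ->
  2 * #|S| <= \sum_(v in S) deg F v + 2.
Proof.
move=> treeF deg2 SU; have [U0 _ _ cardF] := treeF.
move: (tree_deg_sum treeF); rewrite (big_setID S) /= (setIidPr SU) cardF.
have : \sum_(v in U :\: S) deg F v <= #|U :\: S| * 2.
  by rewrite -sum_nat_const; apply: leq_sum => v /setDP[vU _]; apply: deg2.
rewrite cardsD (setIidPr SU).
have : #|S| <= #|U| by apply: subset_leq_card.
have : 0 < #|U| by rewrite card_gt0.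
lia.
Qed.

End ProperTrees.

Arguments proper_tree_grow {T e k c U F u} v {P}.

Section DominatingTriangle.

Variables (T : finType) (e : rel T) (a b c : T).
Hypotheses (ab : a != b) (bc : b != c) (ac : a != c).
Hypotheses (a_dom : forall v, v != a -> e v a) (b_dom : forall v, v != b -> e v b)
  (c_dom : forall v, v != c -> e v c).

(* Colours of the trees built below: ab and bc get 0 and 1, and a pendant
   edge at a, b or c gets 1, 2 or 0 respectively. *)
Definition triangle_coloring : edge_coloring T 3 := fun E =>
  if c \in E then
    (if (a \in E) || (b \in E) then Ordinal (isT : 1 < 3) else Ordinal (isT : 0 < 3))
  else if a \in E then (if b \in E then Ordinal (isT : 0 < 3) else Ordinal (isT : 1 < 3))
  else if b \in E then Ordinal (isT : 2 < 3) else Ordinal (isT : 0 < 3).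

Local Notation col := triangle_coloring.

Lemma triangle_trees x y z :
  exists U F, proper_tree e col U F /\ [/\ x \in U, y \in U & z \in U].
Proof.
have neq := (eq_sym b a, eq_sym c b, eq_sym c a, negbTE ab, negbTE bc, negbTE ac).
apply: (proper_tree_grow b (proper_tree1 e col a) (set11 a) a_dom)
  => [_ E|U1 F1 t1 bU1 sU1]; first by rewrite inE.
rewrite setU0 => sF1; have aU1 : a \in U1 by rewrite (subsetP sU1) ?set11.
apply: (proper_tree_grow c t1 bU1 b_dom) => [_ E|U2 F2 t2 cU2 sU2].
  by move=> /(subsetP sF1)/set1P-> _; rewrite /col !inE !eqxx !neq.
move/subset_trans/(_ (setUS _ sF1)) => {}sF2.
have [aU2 bU2] := (subsetP sU2 a aU1, subsetP sU2 b bU1).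
apply: (proper_tree_grow x t2 aU2 a_dom) => [xU2 E|U3 F3 t3 xU3 sU3].
  have [xa xb xc] : [/\ x != a, x != b & x != c] by split; apply: contraNneq xU2 => ->.
  have neqx := (eq_sym a x, eq_sym b x, eq_sym c x, negbTE xa, negbTE xb, negbTE xc).
  move=> /(subsetP sF2); rewrite !inE => /orP[]/eqP->; rewrite !inE ?eqxx !neq //= => _.
  by rewrite /col !inE !eqxx !neq !neqx.
move/subset_trans/(_ (setUS _ sF2)) => {}sF3.
have [[aU3 bU3] cU3] := (subsetP sU3 a aU2, subsetP sU3 b bU2, subsetP sU3 c cU2).
have F3_ac : {in F3, forall E : {set T}, (a \in E) || (c \in E)}.
  by move=> E /(subsetP sF3); rewrite !inE => /or3P[]/eqP->; rewrite !inE eqxx ?orbT.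
have F3_ab : {in F3, forall E : {set T}, (a \in E) || (b \in E)}.
  by move=> E /(subsetP sF3); rewrite !inE => /or3P[]/eqP->; rewrite !inE eqxx ?orbT.
apply: (proper_tree_grow y t3 bU3 b_dom) => [yU3 E|U4 F4 t4 yU4 sU4 sF4].
  have [ya yb yc] : [/\ y != a, y != b & y != c] by split; apply: contraNneq yU3 => ->.
  have neqy := (eq_sym a y, eq_sym b y, eq_sym c y, negbTE ya, negbTE yb, negbTE yc).
  have -> : col [set y; b] = Ordinal (isT : 2 < 3) by rewrite /col !inE !eqxx !neq !neqy.
  by move=> /F3_ac; rewrite /col => + ->; rewrite orbT; case: (c \in E); case: (a \in E).
have F4_ab : {in F4, forall E : {set T}, (a \in E) || (b \in E)}.
  by move=> E /(subsetP sF4)/setU1P[->|/F3_ab//]; rewrite !inE eqxx !orbT.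
have [[[aU4 bU4] cU4] xU4] :=
  (subsetP sU4 a aU3, subsetP sU4 b bU3, subsetP sU4 c cU3, subsetP sU4 x xU3).
apply: (proper_tree_grow z t4 cU4 c_dom) => [zU4 E|U5 F5 t5 zU5 sU5 _].
  have [za zb zc] : [/\ z != a, z != b & z != c] by split; apply: contraNneq zU4 => ->.
  have neqz := (eq_sym a z, eq_sym b z, eq_sym c z, negbTE za, negbTE zb, negbTE zc).
  have -> : col [set z; c] = Ordinal (isT : 0 < 3) by rewrite /col !inE !eqxx !neq !neqz.
  by move=> /F4_ab abE cE; rewrite /col cE abE.
by exists U5, F5; split=> //; split; rewrite // (subsetP sU5).
Qed.

Lemma dominating_triangle_px3 : px3_le e 3.
Proof.
exists col => S cardS; have : size (enum S) = 3 by rewrite -cardE.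
case defS: (enum S) => [|x [|y [|z [|]]]] // _.
have [U [F [treeF [xU yU zU]]]] := triangle_trees x y z.
exists U, F; split=> //; apply/subsetP => s; rewrite -mem_enum defS !inE.
by case/or3P=> /eqP->.
Qed.

End DominatingTriangle.

Lemma seq_argmax (T : eqType) (w : T -> R) x0 s :
  exists2 m, m \in x0 :: s & {in x0 :: s, forall x, (w x <= w m)%R}.
Proof.
elim: s x0 => [|y s IH] x0.
  by exists x0 => [|x /[1!inE] /eqP->]; [rewrite inE | apply: Rle_refl].
have [m ms m_max] := IH y.
have [le_x0m|lt_mx0] := Rle_dec (w x0) (w m).
  exists m => [|x /[1!inE] /predU1P[->//|/m_max//]]; by rewrite inE ms orbT.
exists x0 => [|x /[1!inE] /predU1P[->|/m_max]]; rewrite ?inE ?eqxx //; first exact: Rle_refl.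
by move=> le_xm; lra.
Qed.

Lemma set_argmax (T : finType) (w : T -> R) (A : {set T}) :
  A != set0 -> exists2 m, m \in A & {in A, forall x, (w x <= w m)%R}.
Proof.
case/set0Pn=> a; rewrite -mem_enum; case defA: (enum A) => [//|x0 s] _.
have [m mA m_max] := seq_argmax w x0 s.
by exists m => [|x xA]; [rewrite -mem_enum defA | apply: m_max; rewrite -defA mem_enum].
Qed.

Lemma min_degree_nbr (T : finType) (e : rel T) d v (X : {set T}) :
  min_degree_ge e d -> #|X| < d -> exists2 u, e v u & u \notin X.
Proof.
move=> deg_d ltXd.
have : ~~ ([set u | e v u] \subset X).
  by apply: contraTN ltXd => /subset_leq_card; rewrite -leqNgt; apply: leq_trans.
by case/subsetPn=> u; rewrite inE; exists u.
Qed.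

Section ThresholdGraph.

Variables (T : finType) (e : rel T) (w : T -> R) (t : R).
Hypotheses (e_irr : irreflexive e)
  (e_w : forall u v : T, u != v -> (e u v <-> (t <= w u + w v)%R)).

Lemma threshold_dominating (v0 : T) (X : {set T}) :
  (forall v, exists2 u, e v u & u \notin X) ->
  exists2 m, m \notin X & forall v, v != m -> e v m.
Proof.
move=> nbr; have [u _ uX] := nbr v0.
have [m mX m_max] : exists2 m, m \in ~: X & {in ~: X, forall x, (w x <= w m)%R}.
  by apply: set_argmax; apply/set0Pn; exists u; rewrite inE.
exists m => [|v vm]; first by rewrite -in_setC.
have [u' evu' u'X] := nbr v.
have vu' : v != u' by apply: contraTneq evu' => <-; rewrite e_irr.
have := m_max u' (ltac:(by rewrite inE)); move/(e_w vu'): evu'.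
by move=> le_t le_w; apply/(e_w vm); lra.
Qed.

Lemma threshold_px3 (v0 : T) : min_degree_ge e 3 -> px3_le e 3.
Proof.
move=> deg3.
have dom (X : {set T}) : #|X| < 3 -> exists2 m, m \notin X & forall v, v != m -> e v m.
  by move=> ltX3; apply: (threshold_dominating v0) => v; apply: min_degree_nbr deg3 ltX3.
have [a _ a_dom] := dom set0 (ltac:(by rewrite cards0)).
have [b] := dom [set a] (ltac:(by rewrite cards1)); rewrite inE => ba b_dom.
have [c] := dom [set a; b] (ltac:(by rewrite cards2; case: (a != b))).
rewrite !inE negb_or => /andP[ca cb] c_dom.
by apply: (@dominating_triangle_px3 T e a b c); rewrite // eq_sym.
Qed.

End ThresholdGraph.

Lemma pigeonhole (I J : finType) (f : I -> J) n :
  n * #|J| < #|I| -> exists j, n < #|[set i | f i == j]|.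
Proof.
move=> ltnJI; apply/existsP; apply: contraTT ltnJI => /existsPn small.
rewrite -leqNgt -sum1_card (partition_big f predT) //= mulnC -sum_nat_const.
apply: leq_sum => j _.
rewrite (eq_bigl (fun i => i \in [set i | f i == j])) => [|i]; last by rewrite inE.
by rewrite sum1_card leqNgt small.
Qed.

Section JoinK3.

Variables (r k : nat) (c : edge_coloring ('I_r + 'I_3)%type k).
Local Notation e := (rK1_join_K3_rel r).

Lemma join_K3_irr : irreflexive e.
Proof. by case=> //= j; rewrite eqxx. Qed.

Definition color_profile (i : 'I_r) : {ffun 'I_3 -> 'I_k} :=
  [ffun j => c [set inl i; inr j]].

Definition K3_end (E : {set 'I_r + 'I_3}) : 'I_3 := odflt ord0 [pick j | inr j \in E].

Lemma K3_endE i j : K3_end [set inl i; inr j] = j.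
Proof.
rewrite /K3_end; case: pickP => [j'|/(_ j)]; last by rewrite !inE eqxx orbT.
by rewrite !inE => /eqP[].
Qed.

Lemma join_K3_tree_edge_inl U F E i :
  tree_in e U F -> E \in F -> inl i \in E -> exists j, E = [set inl i; inr j].
Proof.
case=> _ edgeF _ _ /edgeF[p [q [-> epq _ _]]] /set2P[] ?; subst.
  by case: q epq => [//|j] _; exists j.
by case: p epq => [//|j] _; exists j; rewrite setUC.
Qed.

Lemma profile_class_deg_sum U F (S : {set 'I_r + 'I_3}) y :
  proper_tree e c U F -> {in S, forall s, exists2 i, s = inl i & color_profile i = y} ->
  \sum_(v in S) deg F v <= 3.
Proof.
move=> [treeF properF] S_prof.
have edge_meet E : E \in F -> S :&: E != set0 ->
    exists i j, [/\ E = [set inl i; inr j], inl i \in S & color_profile i = y].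
  move=> EF /set0Pn[s /setIP[sS sE]]; have [i si prof_i] := S_prof s sS; subst s.
  by have [j defE] := join_K3_tree_edge_inl treeF EF sE; exists i, j.
rewrite sum_deg; apply: (@leq_trans (\sum_(E in F) (S :&: E != set0))).
  apply: leq_sum => E EF; case: eqP => [->|/eqP]; first by rewrite cards0.
  case/(edge_meet E EF)=> i [j [-> iS _]]; apply: (@leq_trans #|[set inl i]|).
    apply: subset_leq_card; apply/subsetP => s /setIP[/S_prof[i' -> _]].
    by move=> /set2P[->|//]; rewrite set11.
  by rewrite cards1.
have -> : \sum_(E in F) (S :&: E != set0) = #|[set E in F | S :&: E != set0]|.
  by rewrite setIdE -sum_mem_card; apply: eq_bigr => E _; rewrite inE.
suff /leq_card_in : {in [set E in F | S :&: E != set0] &, injective K3_end}.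
  by rewrite card_ord.
move=> E1 E2; rewrite !inE => /andP[E1F /(edge_meet _ E1F)[i1 [j1 [defE1 _ prof1]]]].
move=> /andP[E2F /(edge_meet _ E2F)[i2 [j2 [defE2 _ prof2]]]].
move=> endE; have j12 : j1 = j2.
  by rewrite -(K3_endE i1 j1) -(K3_endE i2 j2) -defE1 -defE2.
subst j2; apply/eqP; apply: contraTT isT => E12.
have cE1 : c E1 = y j1 by rewrite defE1 -prof1 ffunE.
have cE2 : c E2 = y j1 by rewrite defE2 -prof2 ffunE.
have := properF _ _ E1F E2F E12; rewrite cE1 cE2 eqxx; apply.
by apply/set0Pn; exists (inr j1); rewrite defE1 defE2 !inE eqxx !orbT.
Qed.

Lemma join_K3_no_px3 : 17 <= r -> k <= 2 -> ~ three_proper_coloring e c.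
Proof.
move=> r17 k2 c3.
have [y /card_geqP[s [uniq_s size_s s_class]]] :
    exists y, 2 < #|[set i | color_profile i == y]|.
  apply: pigeonhole; rewrite card_ffun !card_ord.
  have : expn k 3 <= expn 2 3 by rewrite leq_exp2r.
  lia.
pose S : {set 'I_r + 'I_3} := [set inl i | i in s].
have cardS : #|S| = 3 by rewrite card_imset -?size_s; [apply/card_uniqP | exact: inl_inj].
have S_prof : {in S, forall v, exists2 i, v = inl i & color_profile i = y}.
  by move=> _ /imsetP[i /s_class + ->]; rewrite inE => /eqP; exists i.
have [U [F [treeF SU]]] := c3 S cardS.
have := path_tree_deg_sum_ge join_K3_irr treeF.1
  (fun v _ => leq_trans (proper_tree_deg_le v treeF) k2) SU.
have := profile_class_deg_sum treeF S_prof.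
rewrite cardS => le3; apply/negP; rewrite -ltnNge.
exact: leq_ltn_trans (leq_add le3 (leqnn 2)) _.
Qed.

End JoinK3.

Theorem corollary3p5 :
  (forall (T : finType) (e : rel T),
      symmetric e -> irreflexive e ->
      threshold_graph e -> connected_graph e -> min_degree_ge e 3 ->
      px3_le e 3)
  /\
  (forall r : nat, 17 <= r -> px3_eq (rK1_join_K3_rel r) 3).
Proof.
split=> [T e _ e_irr [w [t e_w]] _ deg3 | r r17].
  case: (pickP (fun _ : T => true)) => [v0 _|T0].
    exact: threshold_px3 e_irr e_w v0 deg3.
  by exists (fun=> ord0) => S; rewrite (eq_card0 (A := S)) // => x; have := T0 x.
split=> [|j ltj3 [c c3]]; last exact: join_K3_no_px3 r17 ltj3 c3.
have K3_dom j : forall v, v != inr j -> rK1_join_K3_rel r v (inr j).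
  by case=> [//|j'] /=; rewrite (inj_eq inr_inj).
exact: (@dominating_triangle_px3 _ _ (inr ord0) (inr (Ordinal (isT : 1 < 3)))
  (inr ord_max) isT isT isT (K3_dom _) (K3_dom _) (K3_dom _)).
Qed.
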